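(* Let $\mathcal{K}$ be the fraction field of a discrete valuation ring $\mathscr{O}_{\mathcal{K}}$ with residue field $k$ and normalized discrete valuation $v:\mathcal{K}^\times\to\mathbf{Z}$. Let $E$ be an elliptic curve over $\mathcal{K}$ with potentially good reduction, and let $\Delta$ be the discriminant of a Weierstrass model of $E$ over $\mathcal{K}$. If $E$ has good reduction, then $v(\Delta) \equiv 0 \bmod 12$. Conversely, if $v(\Delta)\equiv 0 \bmod 12$ then $E$ has good reduction, provided that either (1) $\mathrm{char}(k) \neq 2, 3$, or (2) $\mathrm{char}(k)\neq 2$ and $E(\mathcal{K})[2] \neq O$.
   Context: $\Delta$ is well defined modulo $(\mathcal{K}^\times)^{12}$, independent of the choice of Weierstrass model. *)

From HB Require Import structures.
From mathcomp Require Import all_boot all_order all_algebra all_field.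
Set Implicit Arguments. Unset Strict Implicit. Unset Printing Implicit Defensive.
Import Order.TTheory GRing.Theory Num.Theory.
Local Open Scope ring_scope.

(* A normalized discrete valuation v : K^x -> Z (values at 0 are irrelevant). *)
Record dvaluation (K : fieldType) := DValuation {
  val_fun :> K -> int;
  valM : forall x y : K, x != 0 -> y != 0 -> val_fun (x * y) = val_fun x + val_fun y;
  valD : forall x y : K, x != 0 -> y != 0 -> x + y != 0 ->
           Num.min (val_fun x) (val_fun y) <= val_fun (x + y);
  val_normalized : exists pi : K, pi != 0 /\ val_fun pi = 1
}.

Definition in_valring (K : fieldType) (v : dvaluation K) (x : K) : bool :=
  (x == 0) || (0 <= v x).
Definition in_maxideal (K : fieldType) (v : dvaluation K) (x : K) : bool :=
  (x == 0) || (0 < v x).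

(* char(k) <> p for the residue field k = O_K / m : p * 1 is nonzero in k,
   i.e. p%:R does not lie in the maximal ideal. *)
Definition resid_char_neq (K : fieldType) (v : dvaluation K) (p : nat) : Prop :=
  ~~ in_maxideal v (p%:R : K).

(* Weierstrass equations y^2 + a1 xy + a3 y = x^3 + a2 x^2 + a4 x + a6. *)
Record wmodel (K : Type) := WModel { a1 : K; a2 : K; a3 : K; a4 : K; a6 : K }.

Section Weierstrass.
Variable K : fieldType.
Implicit Types W : wmodel K.

Definition b2 W := a1 W ^+ 2 + 4 * a2 W.
Definition b4 W := 2 * a4 W + a1 W * a3 W.
Definition b6 W := a3 W ^+ 2 + 4 * a6 W.
Definition b8 W := a1 W ^+ 2 * a6 W + 4 * a2 W * a6 W - a1 W * a3 W * a4 W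
                   + a2 W * a3 W ^+ 2 - a4 W ^+ 2.
Definition disc W := - b2 W ^+ 2 * b8 W - 8 * b4 W ^+ 3 - 27 * b6 W ^+ 2
                     + 9 * b2 W * b4 W * b6 W.

(* Standard change of coordinates x = u^2 x' + r, y = u^3 y' + s u^2 x' + t
   (Silverman, III.1 / Table 3.1), giving the new coefficients a_i'. *)
Definition change_coord W (u r s t : K) : wmodel K :=
  WModel
    ((a1 W + 2 * s) / u)
    ((a2 W - s * a1 W + 3 * r - s ^+ 2) / u ^+ 2)
    ((a3 W + r * a1 W + 2 * t) / u ^+ 3)
    ((a4 W - s * a3 W + 2 * r * a2 W - (t + r * s) * a1 W + 3 * r ^+ 2
       - 2 * s * t) / u ^+ 4)
    ((a6 W + r * a4 W + r ^+ 2 * a2 W + r ^+ 3 - t * a3 W - t ^+ 2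
       - r * t * a1 W) / u ^+ 6).

(* W' is a Weierstrass model (over K) of the same curve as W. *)
Definition wiso W W' : Prop :=
  exists u r s t : K, u != 0 /\ W' = change_coord W u r s t.

Definition on_curve W (x y : K) : bool :=
  y ^+ 2 + a1 W * x * y + a3 W * y ==
  x ^+ 3 + a2 W * x ^+ 2 + a4 W * x + a6 W.
Definition neg_y W (x y : K) : K := - y - a1 W * x - a3 W.

(* E(K)[2] <> O : there is a K-rational point P <> O with P = -P (i.e. 2P = O). *)
Definition has_nontriv_2torsion W : Prop :=
  exists x y : K, on_curve W x y /\ neg_y W x y = y.

Definition wmap (L : fieldType) (f : K -> L) W : wmodel L :=
  WModel (f (a1 W)) (f (a2 W)) (f (a3 W)) (f (a4 W)) (f (a6 W)).

End Weierstrass.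

Definition integral_model (K : fieldType) (v : dvaluation K) (W : wmodel K) :=
  [&& in_valring v (a1 W), in_valring v (a2 W), in_valring v (a3 W),
      in_valring v (a4 W) & in_valring v (a6 W)].

Definition good_reduction (K : fieldType) (v : dvaluation K) (W : wmodel K) : Prop :=
  exists W' : wmodel K, wiso W W' /\ integral_model v W' /\
    disc W' != 0 /\ v (disc W') = 0.

(* Potentially good reduction: good reduction over some finite extension L/K,
   with respect to a normalized discrete valuation w of L extending v
   (w|_K = e * v, ramification index e > 0). *)
Definition pot_good_reduction (K : fieldType) (v : dvaluation K) (W : wmodel K) : Prop :=
  exists (L : fieldExtType K) (w : dvaluation L) (e : nat),
    (0 < e)%N /\ (forall x : K, x != 0 -> w (x%:A) = (e%:Z * v x)%R) /\
    good_reduction w (wmap (fun x : K => x%:A : L) W).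

(* Under x = u^2 x' + r, y = u^3 y' + s u^2 x' + t the discriminant is divided
   by u^12 and c4 by u^4, so v(disc) mod 12 and j = c4^3 / disc only depend on
   the curve.  A model with good reduction has integral c4 and unit discriminant,
   hence v(disc) = 0 mod 12 and j is integral; applied over an extension, this
   shows that potentially good reduction already forces j to be integral.
   Conversely, if v(disc) = 12 k, scaling by some u with v(u) = k gives models
   with unit discriminant, whose c4 is integral since c4^3 = j disc.  It remains
   to pick r, s, t making the model integral.  If 2 and 3 are units, completing
   the square and the cube gives y^2 = x^3 - c4/48 x - c6/864, and
   c6^2 = c4^3 - 1728 disc is integral.  If 2 is a unit and (x0, y0) is a
   rational 2-torsion point, moving it to (0, 0) gives y^2 = x^3 + a x^2 + b x,
   where c4 = 16 (a^2 - 3 b) and disc = 16 b^2 (a^2 - 4 b) force first b and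
   then a to be integral. *)

From Pilot Require Import Defs.
From HB Require Import structures.
From mathcomp Require Import all_boot all_order all_algebra all_field.
From mathcomp Require Import zify ring.
Import Order.TTheory GRing.Theory Num.Theory.
Set Implicit Arguments. Unset Strict Implicit. Unset Printing Implicit Defensive.
Local Open Scope ring_scope.

Definition in_valunit (K : fieldType) (v : dvaluation K) (x : K) : bool :=
  (x != 0) && (v x == 0).

Section Valuation.
Variables (K : fieldType) (v : dvaluation K).

Lemma dval1 : v 1 = 0.
Proof.
have := Defs.valM v (oner_neq0 K) (oner_neq0 K).
by rewrite mulr1 -{1}[v 1]addr0 => /addrI <-.
Qed.

Lemma dvalN1 : v (-1) = 0.
Proof.
have N1_neq0 : (-1 : K) != 0 by rewrite oppr_eq0 oner_neq0.
have := Defs.valM v N1_neq0 N1_neq0; rewrite mulrNN mulr1 dval1 => /esym/eqP.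
by rewrite -mulr2n mulrn_eq0 => /eqP.
Qed.

Lemma dvalN x : x != 0 -> v (- x) = v x.
Proof.
move=> x0; rewrite -mulN1r Defs.valM ?oppr_eq0 ?oner_neq0 //.
by rewrite dvalN1 add0r.
Qed.

Lemma dvalV x : x != 0 -> v x^-1 = - v x.
Proof.
move=> x0; have := Defs.valM v x0 (invr_neq0 x0).
by rewrite mulfV // dval1 => /esym/eqP; rewrite addrC addr_eq0 => /eqP.
Qed.

Lemma dvalX x n : x != 0 -> v (x ^+ n) = n%:Z * v x.
Proof.
move=> x0; elim: n => [|n IHn]; first by rewrite expr0 dval1 mul0r.
by rewrite exprS Defs.valM ?expf_neq0 // IHn intS mulrDl mul1r.
Qed.

Lemma dval_surj (z : int) : exists2 u : K, u != 0 & v u = z.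
Proof.
have [pi [pi0 vpi]] := val_normalized v.
case: z => n; first by exists (pi ^+ n); rewrite ?expf_neq0 // dvalX // vpi mulr1.
exists (pi ^+ n.+1)^-1; first by rewrite invr_neq0 ?expf_neq0.
by rewrite dvalV ?expf_neq0 // dvalX // vpi mulr1 NegzE.
Qed.

Lemma in_valringE x : x != 0 -> (x \in in_valring v) = (0 <= v x).
Proof. by rewrite unfold_in /in_valring => /negbTE ->. Qed.

Lemma valring_subring_closed : subring_closed (in_valring v).
Proof.
have valr0 : 0 \in in_valring v by rewrite unfold_in /in_valring eqxx.
have valrD x y : x \in in_valring v -> y \in in_valring v -> x + y \in in_valring v.
  have [->|x0] := eqVneq x 0; first by rewrite add0r.
  have [->|y0] := eqVneq y 0; first by rewrite addr0.
  have [->|xy0] := eqVneq (x + y) 0; first by [].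
  rewrite !in_valringE // => vx vy.
  by apply: le_trans (Defs.valD v x0 y0 xy0); rewrite le_min vx vy.
split=> [|x y vx vy|x y]; first by rewrite in_valringE ?oner_neq0 // dval1.
  apply: valrD => //; have [->|y0] := eqVneq y 0; first by rewrite oppr0.
  by rewrite in_valringE ?oppr_eq0 // dvalN // -in_valringE.
have [->|x0] := eqVneq x 0; first by rewrite mul0r.
have [->|y0] := eqVneq y 0; first by rewrite mulr0.
rewrite !in_valringE ?mulf_neq0 // Defs.valM //; exact: addr_ge0.
Qed.

Lemma valunit_sdivr_closed : sdivr_closed (in_valunit v).
Proof.
split; first by rewrite unfold_in /in_valunit oppr_eq0 oner_neq0 dvalN1.
move=> x y; rewrite !unfold_in /in_valunit => /andP[x0 /eqP vx] /andP[y0 /eqP vy].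
by rewrite mulf_neq0 ?invr_neq0 //= Defs.valM ?invr_neq0 // dvalV // vx vy.
Qed.

End Valuation.

HB.instance Definition _ (K : fieldType) (v : dvaluation K) :=
  GRing.isSubringClosed.Build K (in_valring v) (valring_subring_closed v).
HB.instance Definition _ (K : fieldType) (v : dvaluation K) :=
  GRing.isSdivClosed.Build K (in_valunit v) (valunit_sdivr_closed v).

Section ValuationRing.
Variables (K : fieldType) (v : dvaluation K).

Lemma valunit_neq0 x : x \in in_valunit v -> x != 0.
Proof. by rewrite unfold_in => /andP[]. Qed.

Lemma valunit_valring x : x \in in_valunit v -> x \in in_valring v.
Proof. by rewrite unfold_in => /andP[x0 /eqP vx]; rewrite in_valringE // vx. Qed.

Lemma valring_divr x y :
  x \in in_valring v -> y \in in_valunit v -> x / y \in in_valring v.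
Proof. by move=> xi yu; apply: (rpredM xi); apply: valunit_valring; rewrite rpredV. Qed.

Lemma valring_root x n : (0 < n)%N -> x ^+ n \in in_valring v -> x \in in_valring v.
Proof.
have [->|x0] := eqVneq x 0; first by rewrite rpred0.
by move=> n_gt0; rewrite !in_valringE ?expf_neq0 // dvalX // pmulr_rge0 ?ltz_nat.
Qed.

Lemma resid_char_neq_valunit p : resid_char_neq v p -> p%:R \in in_valunit v.
Proof.
rewrite /resid_char_neq /in_maxideal negb_or => /andP[p0 vp].
have : p%:R \in in_valring v := rpred_nat _ p.
rewrite in_valringE // => vp_ge0.
by rewrite unfold_in /in_valunit p0 eq_le vp_ge0 andbT leNgt.
Qed.

End ValuationRing.

Section WeierstrassInvariants.
Variable K : fieldType.
Implicit Types W : wmodel K.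

Definition c4 W := b2 W ^+ 2 - 24 * b4 W.
Definition c6 W := - b2 W ^+ 3 + 36 * b2 W * b4 W - 216 * b6 W.
Definition jinv W := c4 W ^+ 3 / disc W.

Lemma c4_c6_disc W : c4 W ^+ 3 - c6 W ^+ 2 = 1728 * disc W.
Proof. by rewrite /c4 /c6 /disc /b2 /b4 /b6 /b8; ring. Qed.

Definition wtransl W (r s t : K) :=
  WModel (a1 W + 2 * s) (a2 W - s * a1 W + 3 * r - s ^+ 2)
    (a3 W + r * a1 W + 2 * t)
    (a4 W - s * a3 W + 2 * r * a2 W - (t + r * s) * a1 W + 3 * r ^+ 2 - 2 * s * t)
    (a6 W + r * a4 W + r ^+ 2 * a2 W + r ^+ 3 - t * a3 W - t ^+ 2 - r * t * a1 W).

Definition wscale W (u : K) :=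
  WModel (a1 W / u) (a2 W / u ^+ 2) (a3 W / u ^+ 3) (a4 W / u ^+ 4) (a6 W / u ^+ 6).

Lemma change_coordE W u r s t : change_coord W u r s t = wscale (wtransl W r s t) u.
Proof. by []. Qed.

Lemma disc_wtransl W r s t : disc (wtransl W r s t) = disc W.
Proof. by rewrite /disc /b2 /b4 /b6 /b8 /=; ring. Qed.

Lemma c4_wtransl W r s t : c4 (wtransl W r s t) = c4 W.
Proof. by rewrite /c4 /b2 /b4 /=; ring. Qed.

Lemma disc_wscale W u : u != 0 -> disc (wscale W u) = disc W / u ^+ 12.
Proof. by move=> u0; rewrite /disc /b2 /b4 /b6 /b8 /=; field. Qed.

Lemma c4_wscale W u : u != 0 -> c4 (wscale W u) = c4 W / u ^+ 4.
Proof. by move=> u0; rewrite /c4 /b2 /b4 /=; field. Qed.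

Lemma disc_change_coord W u r s t : u != 0 ->
  disc (change_coord W u r s t) = disc W / u ^+ 12.
Proof. by move=> u0; rewrite change_coordE disc_wscale // disc_wtransl. Qed.

Lemma c4_change_coord W u r s t : u != 0 ->
  c4 (change_coord W u r s t) = c4 W / u ^+ 4.
Proof. by move=> u0; rewrite change_coordE c4_wscale // c4_wtransl. Qed.

Lemma jinv_change_coord W u r s t : u != 0 -> jinv (change_coord W u r s t) = jinv W.
Proof.
move=> u0; rewrite /jinv disc_change_coord // c4_change_coord //.
have [->|D0] := eqVneq (disc W) 0; first by rewrite !mul0r !invr0 !mulr0.
by field; apply/andP.
Qed.

Lemma short_change_coord W : 2%:R != 0 :> K -> 3%:R != 0 :> K ->
  exists r s t, forall u, [/\ a1 (change_coord W u r s t) = 0,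
                              a2 (change_coord W u r s t) = 0 &
                              a3 (change_coord W u r s t) = 0].
Proof.
move=> two0 three0; set r := - b2 W / 12; set s := - a1 W / 2.
exists r, s, (- (a3 W + r * a1 W) / 2) => u /=.
have twelve0 : 12%:R != 0 :> K by rewrite (natrM K 4 3) (natrM K 2 2) !mulf_neq0.
have -> : a1 W + 2 * s = 0 by rewrite /s; field.
have -> : a2 W - s * a1 W + 3 * r - s ^+ 2 = 0.
  by rewrite /s /r /b2; field; apply/andP.
have -> : a3 W + r * a1 W + 2 * (- (a3 W + r * a1 W) / 2) = 0 by field.
by rewrite !mul0r.
Qed.

Lemma two_torsion_change_coord W : 2%:R != 0 :> K -> has_nontriv_2torsion W ->
  exists r s t, forall u, [/\ a1 (change_coord W u r s t) = 0,
                              a3 (change_coord W u r s t) = 0 &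
                              a6 (change_coord W u r s t) = 0].
Proof.
move=> two0 [x [y [/eqP onW negy]]]; exists x, (- a1 W / 2), y => u /=.
have -> : a1 W + 2 * (- a1 W / 2) = 0 by field.
have -> : a3 W + x * a1 W + 2 * y = y - neg_y W x y by rewrite /neg_y; ring.
have -> : a6 W + x * a4 W + x ^+ 2 * a2 W + x ^+ 3 - y * a3 W - y ^+ 2 - x * y * a1 W
    = (x ^+ 3 + a2 W * x ^+ 2 + a4 W * x + a6 W)
      - (y ^+ 2 + a1 W * x * y + a3 W * y) by ring.
by rewrite negy onW !subrr !mul0r.
Qed.

End WeierstrassInvariants.

Section Morphism.
Variables (K L : fieldType) (f : {rmorphism K -> L}).
Implicit Types W : wmodel K.

Lemma disc_wmap W : disc (wmap f W) = f (disc W).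
Proof.
rewrite /disc /b2 /b4 /b6 /b8 /=.
by rewrite !(rmorphB, rmorphD, rmorphM, rmorphN, rmorphXn, rmorph_nat); ring.
Qed.

Lemma c4_wmap W : c4 (wmap f W) = f (c4 W).
Proof.
rewrite /c4 /b2 /b4 /=.
by rewrite !(rmorphB, rmorphD, rmorphM, rmorphN, rmorphXn, rmorph_nat); ring.
Qed.

Lemma jinv_wmap W : jinv (wmap f W) = f (jinv W).
Proof. by rewrite /jinv disc_wmap c4_wmap fmorph_div rmorphXn. Qed.

End Morphism.

Section GoodReduction.
Variables (K : fieldType) (v : dvaluation K).
Implicit Types W : wmodel K.

Lemma integral_modelE W : integral_model v W =
  [&& a1 W \in in_valring v, a2 W \in in_valring v, a3 W \in in_valring v,
      a4 W \in in_valring v & a6 W \in in_valring v].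
Proof. by []. Qed.

Lemma c4_integral W : integral_model v W -> c4 W \in in_valring v.
Proof.
case/and5P=> a1i a2i a3i a4i _.
rewrite /c4 /b2 /b4.
by do ![apply: rpred_nat | apply: rpredB | apply: rpredD | apply: rpredM | apply: rpredX].
Qed.

Lemma good_reduction_change_coord W u r s t : u != 0 ->
  integral_model v (change_coord W u r s t) ->
  disc (change_coord W u r s t) \in in_valunit v -> good_reduction v W.
Proof.
move=> u0 Wi; rewrite unfold_in => /andP[D0 /eqP vD].
by exists (change_coord W u r s t); split=> //; exists u, r, s, t.
Qed.

Lemma jinv_good_reduction W : good_reduction v W -> jinv W \in in_valring v.
Proof.
case=> _ [[u [r [s [t [u0 ->]]]]] [Wi [D0 vD]]].
rewrite -(jinv_change_coord _ r s t u0) valring_divr ?rpredX ?c4_integral //.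
by rewrite unfold_in /in_valunit D0 vD eqxx.
Qed.

Lemma dval_disc_change_coord W u r s t : u != 0 -> disc W != 0 ->
  v (disc (change_coord W u r s t)) = v (disc W) - 12 * v u.
Proof.
move=> u0 D0; rewrite disc_change_coord // Defs.valM ?invr_neq0 ?expf_neq0 //.
by rewrite dvalV ?expf_neq0 // dvalX.
Qed.

Lemma good_reduction_dvd_disc W :
  disc W != 0 -> good_reduction v W -> (12 %| v (disc W))%Z.
Proof.
move=> D0 [_ [[u [r [s [t [u0 ->]]]]] [_ [_ vD]]]].
move: vD; rewrite dval_disc_change_coord // => /eqP; rewrite subr_eq0 => /eqP->.
by rewrite dvdz_mulr.
Qed.

End GoodReduction.

Lemma in_valring_scalar (K : fieldType) (v : dvaluation K)
    (L : fieldExtType K) (w : dvaluation L) (e : nat) :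
  (0 < e)%N -> (forall x : K, x != 0 -> w x%:A = e%:Z * v x) ->
  forall x : K, (x%:A \in in_valring w) = (x \in in_valring v).
Proof.
move=> e_gt0 wv x; have [->|x0] := eqVneq x 0; first by rewrite scale0r !rpred0.
have xA0 : x%:A != 0 :> L by rewrite scaler_eq0 oner_eq0 orbF.
rewrite !in_valringE //.
have -> : (0 <= v x) = (0 <= e%:Z * v x) by rewrite pmulr_rge0 ?ltz_nat.
by rewrite -wv.
Qed.

Lemma jinv_pot_good_reduction (K : fieldType) (v : dvaluation K) (W : wmodel K) :
  pot_good_reduction v W -> jinv W \in in_valring v.
Proof.
case=> L [w [e [e_gt0 [wv goodL]]]].
rewrite -(in_valring_scalar e_gt0 wv) -[_%:A]/(in_alg L _) -jinv_wmap.
exact: jinv_good_reduction.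
Qed.

Section Converse.
Variables (K : fieldType) (v : dvaluation K).
Implicit Types W : wmodel K.

Lemma disc_change_coord_valunit W u r s t : u != 0 -> disc W != 0 ->
  v (disc W) = 12 * v u -> disc (change_coord W u r s t) \in in_valunit v.
Proof.
move=> u0 D0 vD.
rewrite unfold_in /in_valunit dval_disc_change_coord // vD subrr eqxx.
by rewrite disc_change_coord // mulf_neq0 ?invr_neq0 ?expf_neq0.
Qed.

Lemma c4_integral_unit_disc W : jinv W \in in_valring v -> disc W \in in_valunit v ->
  c4 W \in in_valring v.
Proof.
move=> ji Du; apply: (@valring_root _ _ _ 3) => //.
by rewrite -[c4 W ^+ 3](mulfVK (valunit_neq0 Du)) (rpredM ji) ?valunit_valring.
Qed.

Lemma short_model_integral W : a1 W = 0 -> a2 W = 0 -> a3 W = 0 ->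
  2%:R \in in_valunit v -> 3%:R \in in_valunit v ->
  disc W \in in_valunit v -> c4 W \in in_valring v -> integral_model v W.
Proof.
move=> a1W a2W a3W two_u three_u Du c4i.
have coef_u m n : - (2 ^+ m * 3 ^+ n) \in in_valunit v by rewrite rpredN rpredM ?rpredX.
have c6i : c6 W \in in_valring v.
  apply: (@valring_root _ _ _ 2) => //.
  have -> : c6 W ^+ 2 = c4 W ^+ 3 - 1728 * disc W by rewrite -c4_c6_disc; ring.
  by rewrite rpredB ?rpredX // rpredM ?rpred_nat ?valunit_valring.
have a4i : a4 W \in in_valring v.
  have c4E : c4 W = - (2 ^+ 4 * 3 ^+ 1) * a4 W.
    by rewrite /c4 /b2 /b4 a1W a2W a3W; ring.
  by rewrite -(mulKf (valunit_neq0 (coef_u 4 1)) (a4 W)) -c4E mulrC valring_divr.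
have a6i : a6 W \in in_valring v.
  have c6E : c6 W = - (2 ^+ 5 * 3 ^+ 3) * a6 W.
    by rewrite /c6 /b2 /b4 /b6 a1W a2W a3W; ring.
  by rewrite -(mulKf (valunit_neq0 (coef_u 5 3)) (a6 W)) -c6E mulrC valring_divr.
by rewrite integral_modelE a1W a2W a3W rpred0 a4i a6i.
Qed.

Lemma two_torsion_model_integral W : a1 W = 0 -> a3 W = 0 -> a6 W = 0 ->
  2%:R \in in_valunit v -> disc W \in in_valunit v -> c4 W \in in_valring v ->
  integral_model v W.
Proof.
move=> a1W a3W a6W two_u Du c4i; set a := a2 W; set b := a4 W.
have u16 : 2 ^+ 4 \in in_valunit v by rewrite rpredX.
have Ai : a ^+ 2 - 3 * b \in in_valring v.
  have c4E : c4 W = 2 ^+ 4 * (a ^+ 2 - 3 * b).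
    by rewrite /c4 /b2 /b4 a1W a3W /a /b; ring.
  by rewrite -(mulKf (valunit_neq0 u16) (_ - _)) -c4E mulrC valring_divr.
set c := a ^+ 2 - 4 * b.
have bcu : b ^+ 2 * c \in in_valunit v.
  have DE : disc W = 2 ^+ 4 * (b ^+ 2 * c).
    by rewrite /disc /b2 /b4 /b6 /b8 a1W a3W a6W /c /a /b; ring.
  by rewrite -(mulKf (valunit_neq0 u16) (_ * c)) -DE mulrC rpred_div.
have [b0 c0] : b != 0 /\ c != 0.
  by move: (valunit_neq0 bcu); rewrite mulf_eq0 expf_eq0 negb_or /= => /andP[].
have vbc : 2%:Z * v b + v c = 0.
  by move: bcu; rewrite unfold_in => /andP[_ /eqP]; rewrite Defs.valM ?expf_neq0 // dvalX.
have bi : b \in in_valring v.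
  have [vb_ge0|vb_lt0] := leP 0 (v b); first by rewrite in_valringE.
  have ci : c \in in_valring v by rewrite in_valringE //; lia. (* v c = -2 v b *)
  rewrite (_ : b = (a ^+ 2 - 3 * b) - c); last by rewrite /c; ring.
  by rewrite rpredB.
have ai : a \in in_valring v.
  apply: (@valring_root _ _ _ 2) => //.
  rewrite (_ : a ^+ 2 = (a ^+ 2 - 3 * b) + 3 * b); last by ring.
  by rewrite rpredD // rpredM // rpred_nat.
by rewrite integral_modelE a1W a3W a6W rpred0 ai bi.
Qed.

End Converse.

Theorem lemma2p1 (K : fieldType) (v : dvaluation K) (W : wmodel K) :
  disc W != 0 -> pot_good_reduction v W ->
  (good_reduction v W -> (12 %| v (disc W))%Z) /\
  ((12 %| v (disc W))%Z ->
     (resid_char_neq v 2 /\ resid_char_neq v 3) \/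
     (resid_char_neq v 2 /\ has_nontriv_2torsion W) ->
     good_reduction v W).
Proof.
move=> D0 pot_good; split; first exact: good_reduction_dvd_disc.
move=> /dvdzP[k vD] resid_char.
have [u u0 vu] := dval_surj v k.
have Du r s t : disc (change_coord W u r s t) \in in_valunit v.
  by apply: disc_change_coord_valunit; rewrite // vD vu mulrC.
have c4i r s t : c4 (change_coord W u r s t) \in in_valring v.
  by rewrite c4_integral_unit_disc // jinv_change_coord // jinv_pot_good_reduction.
case: resid_char => [[/resid_char_neq_valunit two_u /resid_char_neq_valunit three_u]
                    |[/resid_char_neq_valunit two_u tors]].
- have [r [s [t short]]] :=
    short_change_coord W (valunit_neq0 two_u) (valunit_neq0 three_u).
  apply: (good_reduction_change_coord u0 _ (Du r s t)).
  by case: (short u) => *; apply: short_model_integral.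
- have [r [s [t short]]] := two_torsion_change_coord (valunit_neq0 two_u) tors.
  apply: (good_reduction_change_coord u0 _ (Du r s t)).
  by case: (short u) => *; apply: two_torsion_model_integral.
Qed.
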